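(* Let $A$ be a transferable wqo and $B$ any wqo. Then $\mathbf{w}(A\times B)\ge \mathbf{w}(A)\cdot \mathbf{o}(B)$.
   Context: A wqo is a quasi-order with no infinite bad sequence (a sequence $x_0,x_1,\dots$ is bad if there are no $i<j$ with $x_i\le x_j$). For a wqo, $\mathbf{w}(A)$ (width) is the rank of the forest of nonempty finite sequences of pairwise incomparable elements ordered by initial segment, and $\mathbf{o}(A)$ (maximal order type) is the rank of the forest of nonempty finite bad sequences ordered by initial segment (rank: $r(s)=\sup\{r(t)+1:t$ child of $s\}$, invariant $=\sup_s(r(s)+1)$); equivalently $\mathbf{o}(A)$ is the largest order type of a linear extension of $A$. $A_{\not\le Y}=\{y\in A: y\not\le x \text{ for all } x\in Y\}$. $A$ is transferable if $\mathbf{w}(A_{\not\le Y})=\mathbf{w}(A)$ for every finite $Y\subseteq A$. $A\times B$ has the componentwise order; $\cdot$ is ordinary ordinal multiplication. *)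

From Stdlib Require Import List Arith.
Import ListNotations.

(* OLim I f denotes sup_{i:I} f i (for arbitrary, possibly empty, index I). *)
Inductive Ord : Type :=
| OZ : Ord
| OS : Ord -> Ord
| OLim : forall (I : Type), (I -> Ord) -> Ord.

(* ole x y  <->  |x| <= |y| ; the inner fix computes |x'| < |y|. *)
Fixpoint ole (x y : Ord) {struct x} : Prop :=
  match x with
  | OZ => True
  | OS x' =>
      (fix olt_x (y : Ord) : Prop :=
         match y with
         | OZ => False
         | OS y' => ole x' y'
         | OLim _ g => exists j, olt_x (g j)
         end) y
  | OLim _ f => forall i, ole (f i) y
  end.

Definition olt (x y : Ord) : Prop := ole (OS x) y.
Definition oeq (x y : Ord) : Prop := ole x y /\ ole y x.

(* Ordinal addition, by recursion on the right argument.
   a + sup_i b_i = sup ({a} U {a + b_i}) (correct also for empty sups). *)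
Fixpoint oadd (a b : Ord) : Ord :=
  match b with
  | OZ => a
  | OS b' => OS (oadd a b')
  | OLim J f => OLim (option J)
                  (fun o => match o with
                            | None => a
                            | Some i => oadd a (f i)
                            end)
  end.

Fixpoint omul (a b : Ord) : Ord :=
  match b with
  | OZ => OZ
  | OS b' => oadd (omul a b') a
  | OLim J f => OLim J (fun i => omul a (f i))
  end.

(* R y x : y is a child of x.  has_rank R x a : node x has rank
   a = sup { rank y + 1 : y child of x }. *)
Inductive has_rank {T : Type} (R : T -> T -> Prop) : T -> Ord -> Prop :=
| has_rank_intro (x : T) (f : {y : T | R y x} -> Ord) :
    (forall y, has_rank R (proj1_sig y) (f y)) ->
    has_rank R x (OLim {y : T | R y x} (fun y => OS (f y))).

(* Forest of nodes (finite sequences satisfying P) ordered by initial segment: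
   children of s are the one-element extensions of s that are nodes. *)
Definition seq_child {T : Type} (P : list T -> Prop) (t s : list T) : Prop :=
  P t /\ exists x, t = s ++ [x].

Definition forest_inv {T : Type} (P : list T -> Prop) (a : Ord) : Prop :=
  exists f : {s : list T | P s} -> Ord,
    (forall s, has_rank (seq_child P) (proj1_sig s) (f s)) /\
    a = OLim {s : list T | P s} (fun s => OS (f s)).

Definition is_qo {T : Type} (le : T -> T -> Prop) : Prop :=
  (forall x, le x x) /\ (forall x y z, le x y -> le y z -> le x z).

Definition is_wqo {T : Type} (le : T -> T -> Prop) : Prop :=
  is_qo le /\
  forall f : nat -> T, exists i j, i < j /\ le (f i) (f j).

Definition antichain_seq {T : Type} (le : T -> T -> Prop) (s : list T) : Prop :=
  s <> [] /\ ForallOrdPairs (fun x y => ~ le x y /\ ~ le y x) s.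

Definition bad_seq {T : Type} (le : T -> T -> Prop) (s : list T) : Prop :=
  s <> [] /\ ForallOrdPairs (fun x y => ~ le x y) s.

Definition is_width {T : Type} (le : T -> T -> Prop) (a : Ord) : Prop :=
  forest_inv (antichain_seq le) a.

Definition is_mot {T : Type} (le : T -> T -> Prop) (a : Ord) : Prop :=
  forest_inv (bad_seq le) a.

Definition not_below {T : Type} (le : T -> T -> Prop) (Y : list T) : Type :=
  {y : T | forall x, In x Y -> ~ le y x}.

Definition not_below_le {T : Type} (le : T -> T -> Prop) (Y : list T)
  (u v : not_below le Y) : Prop := le (proj1_sig u) (proj1_sig v).

Definition transferable {T : Type} (le : T -> T -> Prop) : Prop :=
  forall (Y : list T) (a b : Ord),
    is_width le a -> is_width (not_below_le le Y) b -> oeq b a.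

Definition prod_le {T U : Type} (leT : T -> T -> Prop) (leU : U -> U -> Prop)
  (p q : T * U) : Prop := leT (fst p) (fst q) /\ leU (snd p) (snd q).

(* For a node t of the forest of bad sequences of B and an antichain S of A x B
   all of whose elements are incomparable to every (x, y) with x in A_{not <= Y}
   and y a legal continuation of t, induction on the rank r of t shows that S
   has rank at least w(A) * r.  Passing from t to a child t ++ [b] adds a copy
   of w(A): an antichain s of A_{not <= Y} is lifted to the antichain
   s x {b} appended to S, and after it the region shrinks to
   A_{not <= Y ++ s} x B_{t ++ [b]}, on which the induction hypothesis applies
   again.  Transferability guarantees that the width of A_{not <= Y} is still
   at least w(A), so each copy contributes the full w(A). *)

From Stdlib Require Import List Classical ClassicalEpsilon.
Import ListNotations.

Lemma ole_lim a (I : Type) (g : I -> Ord) i : ole a (g i) -> ole a (OLim I g).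
Proof.
  revert I g i; induction a as [|a IH|J f IH]; intros I g i H; simpl in *.
  - exact Logic.I.
  - exists i; exact H.
  - intro j; apply (IH j I g i), H.
Qed.

Lemma ole_S_and_olt_ole a :
  (forall b, ole a b -> ole a (OS b)) /\ (forall b, olt a b -> ole a b).
Proof.
  unfold olt; induction a as [|a [IHS IHlt]|J f IH].
  - split; intros; exact Logic.I.
  - split; [exact IHlt|].
    induction b as [|b IHb|K g IHb]; intro H.
    + destruct H.
    + exact (IHlt b H).
    + destruct H as [j Hj]; apply ole_lim with j, IHb, Hj.
  - split.
    + intros b H i; apply (proj1 (IH i)), H.
    + induction b as [|b IHb|K g IHb]; intro H.
      * destruct H.
      * intro i; apply (proj1 (IH i)), H.
      * destruct H as [j Hj]; intro i; apply ole_lim with j, (IHb j Hj).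
Qed.

Lemma ole_S a b : ole a b -> ole a (OS b).
Proof. exact (proj1 (ole_S_and_olt_ole a) b). Qed.

Lemma olt_ole a b : olt a b -> ole a b.
Proof. exact (proj2 (ole_S_and_olt_ole a) b). Qed.

Lemma ole_refl a : ole a a.
Proof.
  induction a as [|a IH|J f IH]; simpl.
  - exact Logic.I.
  - exact IH.
  - intro i; apply ole_lim with i, IH.
Qed.

Lemma ole_trans x y z : ole x y -> ole y z -> ole x z.
Proof.
  revert y z; induction x as [|x IHx|J f IHx]; intros y z Hxy Hyz.
  - exact Logic.I.
  - revert z Hxy Hyz; induction y as [|y IHy|K g IHy]; intros z Hxy Hyz.
    + destruct Hxy.
    + induction z as [|z IHz|L h IHz].
      * destruct Hyz.
      * exact (IHx y z Hxy Hyz).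
      * destruct Hyz as [j Hj]; exists j; apply IHz, Hj.
    + destruct Hxy as [j Hj]; apply (IHy j z Hj), Hyz.
  - intro i; apply (IHx i y z), Hyz; apply Hxy.
Qed.

Lemma olt_ole_trans x y z : olt x y -> ole y z -> olt x z.
Proof. apply ole_trans. Qed.

Lemma ole_olt_trans x y z : ole x y -> olt y z -> olt x z.
Proof. apply (ole_trans (OS x) (OS y)). Qed.

Lemma oadd_ge_l x y : ole x (oadd x y).
Proof.
  induction y as [|y IH|J f IH]; simpl.
  - apply ole_refl.
  - apply ole_S, IH.
  - apply ole_lim with None, ole_refl.
Qed.

Lemma oadd_mono_r x b c : ole b c -> ole (oadd x b) (oadd x c).
Proof.
  revert c; induction b as [|b IHb|J f IHb]; intros c H.
  - apply oadd_ge_l.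
  - induction c as [|c IHc|K g IHc].
    + destruct H.
    + exact (IHb c H).
    + destruct H as [j Hj]; simpl; exists (Some j); apply (IHc j Hj).
  - simpl; intros [i|].
    + apply IHb, H.
    + apply oadd_ge_l.
Qed.

Lemma ForallOrdPairs_app {X} (R : X -> X -> Prop) l1 l2 :
  ForallOrdPairs R (l1 ++ l2) <->
  ForallOrdPairs R l1 /\ ForallOrdPairs R l2 /\
  (forall x y, In x l1 -> In y l2 -> R x y).
Proof.
  induction l1 as [|a l1 IH]; simpl.
  - split; [intro H; repeat split; auto; [constructor | tauto] | tauto].
  - split.
    + intro H; inversion H as [|? ? Ha Hl]; subst.
      apply IH in Hl; destruct Hl as [H1 [H2 H12]].
      apply Forall_app in Ha; destruct Ha as [Ha1 Ha2].
      rewrite Forall_forall in Ha2.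
      repeat split; auto; [constructor; auto|].
      intros x y [<-|Hx] Hy; auto.
    + intros [H1 [H2 H12]]; inversion H1; subst; constructor.
      * apply Forall_app; split; auto; apply Forall_forall; auto.
      * apply IH; repeat split; auto.
Qed.

Lemma has_rank_inv {X} (R : X -> X -> Prop) x a : has_rank R x a ->
  exists f : {y : X | R y x} -> Ord,
    (forall y, has_rank R (proj1_sig y) (f y)) /\
    a = OLim {y : X | R y x} (fun y => OS (f y)).
Proof. intros []; eauto. Qed.

Lemma has_rank_of_Acc {X} (R : X -> X -> Prop) x : Acc R x -> exists a, has_rank R x a.
Proof.
  induction 1 as [x _ IH].
  pose (f := fun y : {y : X | R y x} =>
               proj1_sig (constructive_indefinite_description _ (IH _ (proj2_sig y)))).
  exists (OLim {y : X | R y x} (fun y => OS (f y))); constructor.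
  intro y; exact (proj2_sig (constructive_indefinite_description _ _)).
Qed.

Definition prefix_closed {X} (P : list X -> Prop) : Prop :=
  forall l1 l2, P (l1 ++ l2) -> l1 <> [] -> P l1.

(* Every proper extension of [s] that is a node has rank below [d]; this
   holds both for [d] the rank of a node [s] and for [s = []] and [d] the
   invariant of the forest, which lets the empty antichain be treated as a
   root. *)
Definition rank_bound {X} (P : list X -> Prop) (s : list X) (d : Ord) : Prop :=
  forall l, l <> [] -> P (s ++ l) ->
  exists e, has_rank (seq_child P) (s ++ l) e /\ olt e d.

Lemma has_rank_bound {X} (P : list X -> Prop) s d :
  prefix_closed P -> has_rank (seq_child P) s d -> rank_bound P s d.
Proof.
  intros Hpre Hs l; revert s d Hs; induction l as [|z l IH]; intros s d Hs Hl HP.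
  - contradiction.
  - replace (s ++ z :: l) with ((s ++ [z]) ++ l) in * by (rewrite <- app_assoc; reflexivity).
    assert (Psz : P (s ++ [z])) by (apply Hpre with l; [exact HP | now destruct s]).
    destruct (has_rank_inv _ _ _ Hs) as [g [Hg ->]].
    pose (c := exist (fun y => seq_child P y s) (s ++ [z]) (conj Psz (ex_intro _ z eq_refl))).
    assert (Hgc : olt (g c) (OLim _ (fun y => OS (g y)))) by apply ole_lim with c, ole_refl.
    destruct l as [|z' l].
    + exists (g c); rewrite app_nil_r; exact (conj (Hg c) Hgc).
    + destruct (IH _ _ (Hg c) ltac:(discriminate) HP) as [e [He Hlt]].
      exists e; split; [exact He|].
      apply olt_ole_trans with (g c); [exact Hlt | apply olt_ole, Hgc].
Qed.

Lemma forest_inv_bound {X} (P : list X -> Prop) a : forest_inv P a -> rank_bound P [] a.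
Proof.
  intros [f [Hf ->]] l _ Hl.
  exists (f (exist _ l Hl)); split; [apply (Hf (exist _ l Hl))|].
  apply ole_lim with (exist _ l Hl), ole_refl.
Qed.

Lemma antichain_seq_prefix {X} (le : X -> X -> Prop) : prefix_closed (antichain_seq le).
Proof.
  intros l1 l2 [_ H] Hne; split; [exact Hne|].
  apply ForallOrdPairs_app in H; tauto.
Qed.

Lemma not_Acc_branch {X} (P : list X -> Prop) s0 : ~ Acc (seq_child P) s0 ->
  exists (h : nat -> list X) (z : nat -> X),
    h 0 = s0 /\ forall n, h (S n) = h n ++ [z n] /\ P (h (S n)).
Proof.
  set (R := seq_child P); intro Hs0.
  assert (step : forall s, ~ Acc R s -> exists z, ~ Acc R (s ++ [z]) /\ P (s ++ [z])).
  { intros s Hs; apply NNPP; intro Hno; apply Hs; constructor.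
    intros y [Py [z ->]]; apply NNPP; intro Hy; apply Hno; eauto. }
  destruct (step s0 Hs0) as [z0 _].
  pose (next := fun s => epsilon (inhabits z0) (fun z => ~ Acc R (s ++ [z]) /\ P (s ++ [z]))).
  pose (h := fix h n := match n with 0 => s0 | S n => h n ++ [next (h n)] end).
  assert (Hh : forall n, ~ Acc R (h n)).
  { induction n as [|n IH]; [exact Hs0|].
    exact (proj1 (epsilon_spec (inhabits z0) _ (step _ IH))). }
  exists h, (fun n => next (h n)); split; [reflexivity|].
  intro n; split; [reflexivity|].
  exact (proj2 (epsilon_spec (inhabits z0) _ (step _ (Hh n)))).
Qed.

Lemma antichain_forest_Acc {X} (le : X -> X -> Prop) :
  (forall f : nat -> X, exists i j, i < j /\ le (f i) (f j)) ->
  forall s, Acc (seq_child (antichain_seq le)) s.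
Proof.
  intros Hw s0; apply NNPP; intro Hs0.
  destruct (not_Acc_branch _ _ Hs0) as [h [z [_ Hh]]].
  assert (Hext : forall i j, i < j -> exists m, h j = h (S i) ++ m).
  { intros i j Hij; unfold lt in Hij; induction Hij as [|j _ IH].
    - exists []; now rewrite app_nil_r.
    - destruct IH as [m Hm].
      exists (m ++ [z j]); rewrite (proj1 (Hh j)), Hm, app_assoc; reflexivity. }
  destruct (Hw z) as [i [j [Hij Hle]]].
  destruct (Hext i j Hij) as [m Hm].
  destruct (Hh j) as [Ej [_ Hac]].
  rewrite Ej, Hm, (proj1 (Hh i)) in Hac.
  apply ForallOrdPairs_app in Hac; destruct Hac as [_ [_ Hinc]].
  refine (proj1 (Hinc (z i) (z j) _ (or_introl eq_refl)) Hle).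
  apply in_or_app; left; apply in_or_app; right; left; reflexivity.
Qed.

Lemma width_exists {X} (le : X -> X -> Prop) :
  (forall f : nat -> X, exists i j, i < j /\ le (f i) (f j)) -> exists w, is_width le w.
Proof.
  intro Hw.
  assert (H : forall s : {s | antichain_seq le s},
             exists a, has_rank (seq_child (antichain_seq le)) (proj1_sig s) a)
    by (intro s; apply has_rank_of_Acc, antichain_forest_Acc, Hw).
  pose (f := fun s => proj1_sig (constructive_indefinite_description _ (H s))).
  exists (OLim _ (fun s => OS (f s))), f; split; [|reflexivity].
  intro s; exact (proj2_sig (constructive_indefinite_description _ _)).
Qed.

Lemma bad_seq_snoc {X} (le : X -> X -> Prop) t b :
  bad_seq le (t ++ [b]) -> forall c, In c t -> ~ le c b.
Proof.
  intros [_ H] c Hc; apply ForallOrdPairs_app in H.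
  apply (proj2 (proj2 H)); [exact Hc | left; reflexivity].
Qed.

Section Product.
Variables (T U : Type) (leT : T -> T -> Prop) (leU : U -> U -> Prop).

Let antichainTU := antichain_seq (prod_le leT leU).
Let incomparable (p q : T * U) : Prop := ~ prod_le leT leU p q /\ ~ prod_le leT leU q p.

Definition lift {Y : list T} (b : U) (u : not_below leT Y) : T * U := (proj1_sig u, b).

Definition continues (t : list U) (y : U) : Prop := forall c, In c t -> ~ leU c y.

Definition incomp_region (S : list (T * U)) (Y : list T) (t : list U) : Prop :=
  forall x y, (forall z, In z Y -> ~ leT x z) -> continues t y ->
  forall p, In p S -> incomparable p (x, y).

Lemma incomp_region_snoc S Y t b :
  incomp_region S Y t -> incomp_region S Y (t ++ [b]).
Proof.
  intros HS x y Hx Hy; apply HS; [exact Hx|].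
  intros c Hc; apply Hy, in_or_app; left; exact Hc.
Qed.

Lemma antichain_app_lift Y t b S (s : list (not_below leT Y)) :
  incomp_region S Y t -> ForallOrdPairs incomparable S -> continues t b ->
  ForallOrdPairs (fun u v => ~ not_below_le leT Y u v /\ ~ not_below_le leT Y v u) s ->
  ForallOrdPairs incomparable (S ++ map (lift b) s).
Proof.
  intros HS HSa Hb Hs; apply ForallOrdPairs_app; split; [exact HSa|split].
  - clear HS HSa; induction Hs as [|u s Hu _ IH]; simpl; constructor; [|exact IH].
    apply Forall_map; eapply Forall_impl; [|exact Hu].
    intros v [Huv Hvu]; split; intros [H _]; auto.
  - intros p q Hp Hq; apply in_map_iff in Hq; destruct Hq as [u [<- _]].
    apply HS; [exact (proj2_sig u) | exact Hb | exact Hp].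
Qed.

Lemma incomp_region_app_lift Y t b S (s : list (not_below leT Y)) :
  incomp_region S Y t ->
  incomp_region (S ++ map (lift b) s) (Y ++ map (@proj1_sig _ _) s) (t ++ [b]).
Proof.
  intros HS x y Hx Hy p Hp; apply in_app_or in Hp; destruct Hp as [Hp|Hp].
  - apply (incomp_region_snoc S Y t b); auto.
    intros z Hz; apply Hx, in_or_app; left; exact Hz.
  - apply in_map_iff in Hp; destruct Hp as [u [<- Hu]].
    split; intros [H1 H2].
    + apply (Hy b); [apply in_or_app; right; left; reflexivity | exact H2].
    + apply (Hx (proj1_sig u)); [apply in_or_app; right; apply in_map, Hu | exact H1].
Qed.

Variables (wA : Ord).
Hypothesis wqoT : forall f : nat -> T, exists i j, i < j /\ leT (f i) (f j).
Hypothesis transferableT : transferable leT.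
Hypothesis widthT : is_width leT wA.

Section Successor.
Variables (t : list U) (b : U) (X : Ord).
Hypothesis bound_after : forall Y S d,
  incomp_region S Y (t ++ [b]) -> ForallOrdPairs incomparable S ->
  rank_bound antichainTU S d -> ole X d.
Hypothesis continues_b : continues t b.

Lemma oadd_lift_rank_le Y s sg :
  has_rank (seq_child (antichain_seq (not_below_le leT Y))) s sg ->
  antichain_seq (not_below_le leT Y) s ->
  forall S d, incomp_region S Y t -> ForallOrdPairs incomparable S ->
  rank_bound antichainTU (S ++ map (lift b) s) d -> ole (oadd X sg) d.
Proof.
  intro Hs; induction Hs as [s f _ IH]; intros Has S d HS HSa Hd; simpl; intros [c|].
  - change (olt (oadd X (f c)) d).
    pose proof (IH c) as IHc; destruct c as [s' [Hs' [u ->]]]; simpl in IHc.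
    assert (Hac : antichainTU (S ++ map (lift b) (s ++ [u]))).
    { split; [now destruct S, s|].
      apply antichain_app_lift with t; [exact HS | exact HSa | exact continues_b | exact (proj2 Hs')]. }
    rewrite map_app, app_assoc in Hac.
    destruct (Hd [lift b u] ltac:(discriminate) Hac) as [e [He Hlt]].
    apply ole_olt_trans with e; [|exact Hlt].
    apply (IHc Hs' S); [exact HS | exact HSa |].
    rewrite map_app, app_assoc; apply has_rank_bound, He; apply antichain_seq_prefix.
  - apply (bound_after (Y ++ map (@proj1_sig _ _) s) (S ++ map (lift b) s)); [| |exact Hd].
    + apply incomp_region_app_lift, HS.
    + apply antichain_app_lift with t; [exact HS | exact HSa | exact continues_b | exact (proj2 Has)].
Qed.

Lemma oadd_width_le Y S d :
  incomp_region S Y t -> ForallOrdPairs incomparable S ->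
  rank_bound antichainTU S d -> ole (oadd X wA) d.
Proof.
  intros HS HSa Hd.
  destruct (width_exists (not_below_le leT Y)) as [wY HwY].
  { intro f; destruct (wqoT (fun n => proj1_sig (f n))) as [i [j H]]; exists i, j; exact H. }
  assert (HwA : ole wA wY) by exact (proj2 (transferableT Y wA wY widthT HwY)).
  destruct HwY as [sg [Hsg ->]].
  apply ole_trans with (oadd X (OLim _ (fun s => OS (sg s)))); [apply oadd_mono_r, HwA|].
  simpl; intros [[s Hs]|].
  - change (olt (oadd X (sg (exist _ s Hs))) d).
    assert (Hne : map (lift b) s <> []) by (destruct s; [destruct (proj1 Hs) | discriminate]; reflexivity).
    assert (Hac : antichainTU (S ++ map (lift b) s)).
    { split; [intro E; apply Hne, (app_eq_nil _ _ E)|].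
      apply antichain_app_lift with t; [exact HS | exact HSa | exact continues_b | exact (proj2 Hs)]. }
    destruct (Hd _ Hne Hac) as [e [He Hlt]].
    apply ole_olt_trans with e; [|exact Hlt].
    apply (oadd_lift_rank_le Y s _ (Hsg (exist _ s Hs)) Hs S e HS HSa).
    apply has_rank_bound, He; apply antichain_seq_prefix.
  - apply (bound_after Y S); [apply incomp_region_snoc, HS | exact HSa | exact Hd].
Qed.

End Successor.

Lemma omul_rank_le t r :
  has_rank (seq_child (bad_seq leU)) t r ->
  forall Y S d, incomp_region S Y t -> ForallOrdPairs incomparable S ->
  rank_bound antichainTU S d -> ole (omul wA r) d.
Proof.
  intro Ht; induction Ht as [t f _ IH]; intros Y S d HS HSa Hd; simpl; intro c.
  pose proof (IH c) as IHc; destruct c as [t' [Bt' [b ->]]]; simpl in IHc |- *.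
  exact (oadd_width_le t b _ IHc (bad_seq_snoc leU t b Bt') Y S d HS HSa Hd).
Qed.

End Product.

Theorem mainTheorem5 (T U : Type) (leT : T -> T -> Prop) (leU : U -> U -> Prop) :
  is_wqo leT -> is_wqo leU -> transferable leT ->
  forall (wA oB wAB : Ord),
    is_width leT wA -> is_mot leU oB -> is_width (prod_le leT leU) wAB ->
    ole (omul wA oB) wAB.
Proof.
  intros [_ wqoT] _ Htr wA oB wAB HwA [r [Hr ->]] HwAB; simpl; intros [t Ht]; simpl.
  destruct (exists_last (proj1 Ht)) as [t0 [b Et]].
  assert (Hbad : bad_seq leU (t0 ++ [b])) by (rewrite <- Et; exact Ht).
  apply (oadd_width_le T U leT leU wA wqoT Htr HwA t0 b) with (Y := []) (S := []).
  - intros Y S d HS; rewrite <- Et in HS.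
    exact (omul_rank_le T U leT leU wA wqoT Htr HwA t _ (Hr (exist _ t Ht)) Y S d HS).
  - exact (bad_seq_snoc leU t0 b Hbad).
  - intros x y _ _ p [].
  - constructor.
  - exact (forest_inv_bound _ _ HwAB).
Qed.
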